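(* Let $G$ be a graph on $n$ vertices with $3\leq n\leq 7$ and let $k$ be an integer with $2\leq k<n$. If $\psi_k(G)=n-k+1$, then $\psi_j(G)=n-j+1$ for all integers $j$ with $k<j\leq n$.
   Context: All graphs are finite, simple and nonempty. For a graph $G$ and a positive integer $k$, a $k$-path vertex cover ($k$-PVC) of $G$ is a set $S$ of vertices such that every path on $k$ vertices in $G$ contains at least one vertex of $S$ (if $G$ has no path on $k$ vertices, the empty set is a $k$-PVC). $\psi_k(G)$ denotes the minimum cardinality of a $k$-PVC of $G$. *)

From mathcomp Require Import all_boot.
Set Implicit Arguments. Unset Strict Implicit. Unset Printing Implicit Defensive.

(* A finite simple graph: vertex type T : finType, edge relation e : rel T,
   assumed symmetric and irreflexive (hypotheses in the theorem). *)

Definition is_kpath (T : finType) (e : rel T) (k : nat) (p : seq T) : bool :=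
  [&& size p == k, uniq p &
      (if p is x :: s then path e x s else true)].

Definition kpvc (T : finType) (e : rel T) (k : nat) (S : {set T}) : bool :=
  [forall p : k.-tuple T, is_kpath e k p ==> has (mem S) p].

(* psi_k(G): minimum cardinality of a k-PVC (the full vertex set is always a
   k-PVC for k >= 1, so the minimum is attained below #|T|). *)
Definition psi (T : finType) (e : rel T) (k : nat) : nat :=
  \big[minn/#|T|]_(S : {set T} | kpvc e k S) #|S|.

From mathcomp Require Import all_boot zify.
Set Implicit Arguments. Unset Strict Implicit. Unset Printing Implicit Defensive.

(* A set S is a k-PVC iff no k-path lies in its complement, so psi_k(G) = n - k + 1
   exactly when every k-set of vertices induces a traceable subgraph (one with a
   Hamiltonian path). The theorem therefore follows, by induction on j, from the
   absence of hypotraceable graphs on at most 7 vertices: if W has 3 <= m <= 7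
   vertices and every W - u is traceable, then so is W. To see this, take a
   Hamiltonian path p1 ... p(m-1) of W - v. If v is adjacent to an end or to two
   consecutive p_i, the path extends to W. Otherwise use two consequences of the
   traceability of the sets W - u: every vertex has a neighbour in W - u, and no
   three vertices of W - u have one and the same vertex b as their only neighbour
   there, since b has at most two neighbours along a Hamiltonian path. A finite
   case analysis on the neighbours of v (and on a few more edges, each of which
   yields an explicit Hamiltonian path of W) ends in one of these two
   contradictions. *)

Section Traceable.
Variables (T : finType) (e : rel T).

Definition epath (s : seq T) : bool := if s is x :: s' then path e x s' else true.

Definition hamiltonian (A : {set T}) (s : seq T) : Prop :=
  [/\ uniq s, epath s & s =i A].

Definition traceable (A : {set T}) : Prop := exists s, hamiltonian A s.

Definition traceable_subsets (k : nat) : Prop :=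
  forall W : {set T}, #|W| = k -> traceable W.

Lemma hamiltonian_size A s : hamiltonian A s -> size s = #|A|.
Proof. by case=> us _ sA; rewrite -(card_uniqP us); apply: eq_card. Qed.

Lemma traceable_kpath (W : {set T}) :
  traceable W <-> exists2 p, is_kpath e #|W| p & all (mem W) p.
Proof.
split=> [[s hs] | [p /and3P[/eqP sp up pp] pW]].
  have [us ps sW] := hs.
  exists s; last by apply/allP => x; rewrite sW.
  by rewrite /is_kpath (hamiltonian_size hs) eqxx us.
exists p; split=> //; apply/subset_cardP; first by rewrite (card_uniqP up).
by apply/subsetP => x /(allP pW).
Qed.

Lemma kpvcPn k (S : {set T}) :
  reflect (exists2 p, is_kpath e k p & all (mem (~: S)) p) (~~ kpvc e k S).
Proof.
have notS p : all (mem (~: S)) p = ~~ has (mem S) p.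
  by rewrite -all_predC; apply: eq_all => x; rewrite !inE.
rewrite negb_forall; apply: (iffP existsP) => [[p] | [p kp pS]].
  by rewrite negb_imply -notS => /andP[kp Sp]; exists (val p).
have sp : size p == k by case/and3P: kp.
by exists (Tuple sp); rewrite negb_imply kp -notS.
Qed.

Lemma psi_le_card k (S : {set T}) : kpvc e k S -> psi e k <= #|S|.
Proof.
rewrite /psi => hS; have : S \in index_enum {set T} by rewrite mem_index_enum.
elim: (index_enum _) => [//|A r IHr]; rewrite inE big_cons.
case/orP => [/eqP <-|Sr]; first by rewrite hS geq_minl.
by case: (kpvc e k A); rewrite ?geq_min IHr ?orbT.
Qed.

Lemma kpvc_small_complement k (S : {set T}) : #|~: S| < k -> kpvc e k S.
Proof.
move=> small; apply/negPn/kpvcPn => -[p /and3P[/eqP sp up _] pS].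
suff : k <= #|~: S| by rewrite leqNgt small.
by apply/card_geqP; exists p; split=> // x /(allP pS).
Qed.

Lemma exists_subset_card (A : {set T}) m :
  m <= #|A| -> exists2 B : {set T}, B \subset A & #|B| = m.
Proof.
case/card_geqP => s [us <- sA]; exists [set x in s].
  by apply/subsetP => x; rewrite inE => /sA.
by rewrite cardsE (card_uniqP us).
Qed.

Lemma traceable_subsets_of_psi k :
  k <= #|T| -> psi e k = #|T| - k + 1 -> traceable_subsets k.
Proof.
move=> kT psik W cW; apply/traceable_kpath; rewrite cW.
have /kpvcPn[p kp pW] : ~~ kpvc e k (~: W).
  by apply/negP => /psi_le_card; rewrite psik; have := cardsC W; lia.
by exists p => //; apply: sub_all pW => x; rewrite !inE negbK.
Qed.

Lemma psi_of_traceable_subsets k :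
  0 < k <= #|T| -> traceable_subsets k -> psi e k = #|T| - k + 1.
Proof.
move=> /andP[k0 kT] tr; apply/eqP; rewrite eqn_leq; apply/andP; split.
  have /exists_subset_card[S _ cS] : #|T| - k + 1 <= #|[set: T]|.
    by rewrite cardsT; lia.
  rewrite -cS; apply/psi_le_card/kpvc_small_complement; have := cardsC S; lia.
rewrite /psi; apply: (big_ind (fun m => #|T| - k + 1 <= m)) => [|x y|S kS].
- by lia.
- by rewrite leq_min => -> ->.
rewrite leqNgt; apply/negP => small.
have /exists_subset_card[W WS cW] : k <= #|~: S| by have := cardsC S; lia.
have /traceable_kpath[p kp pW] := tr W cW.
move: kS; apply/negP/kpvcPn; exists p; first by rewrite -cW.
by apply: sub_all pW => x /(subsetP WS).
Qed.

Lemma traceable_of_order (x0 : T) (s : seq T) (q : seq nat) :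
  uniq s -> perm_eq q (iota 0 (size s)) -> epath (map (nth x0 s) q) ->
  traceable [set x in s].
Proof.
move=> us qs pq; exists (map (nth x0 s) q).
have perm_s : perm_eq (map (nth x0 s) q) s.
  by rewrite -{2}(mkseq_nth x0 s); apply: perm_map.
split=> //; first by rewrite (perm_uniq perm_s).
by move=> x; rewrite inE (perm_mem perm_s).
Qed.

Definition vertex_deleted_traceable (A : {set T}) : Prop :=
  forall u, u \in A -> traceable (A :\ u).

Hypothesis e_sym : symmetric e.

Lemma epath_adjacent (s : seq T) x : epath s -> 2 <= size s -> x \in s ->
  exists i, [/\ i < size s, (i == (index x s).+1) || (i.+1 == index x s)
                & e x (nth x s i)].
Proof.
case: s => [|h t] // pt st xs; set i := index x (h :: t).
have ilt : i < (size t).+1 by rewrite index_mem.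
have xi : nth x (h :: t) i = x by rewrite nth_index.
clearbody i; rewrite /= in st.
have [it | ti] := ltnP i (size t).
  exists i.+1; split; rewrite ?eqxx //.
  by move/(pathP x): pt => /(_ i it); rewrite xi.
have i0 : 0 < i by lia.
have edge : e (nth x (h :: t) i.-1) (nth x t i.-1).
  by move/(pathP x): pt; apply; rewrite prednK.
exists i.-1; split; [by rewrite ltnW // prednK | by rewrite prednK ?eqxx ?orbT |].
have xt : nth x t i.-1 = x by rewrite -[RHS]xi -(prednK i0).
by rewrite e_sym; rewrite xt in edge.
Qed.

Lemma hamiltonian_adjacent A s x : hamiltonian A s -> 2 <= #|A| -> x \in A ->
  exists y, [/\ y \in A, e x y &
                (index y s == (index x s).+1) || ((index y s).+1 == index x s)].
Proof.
move=> hs; have [us ps sA] := hs; rewrite -(hamiltonian_size hs) -sA => s2 xs.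
have [i [si ix exi]] := epath_adjacent ps s2 xs.
by exists (nth x s i); rewrite -sA mem_nth // index_uniq.
Qed.

Lemma traceable_neighbour A x : traceable A -> 2 <= #|A| -> x \in A ->
  exists2 y, y \in A & (y != x) && e x y.
Proof.
move=> [s hs] A2 xA; have [y [yA xy iy]] := hamiltonian_adjacent hs A2 xA.
by exists y; rewrite // xy andbT; apply: contraTneq iy => ->; lia.
Qed.

Lemma no_three_pendants A b x y z : traceable A ->
  x \in A -> y \in A -> z \in A -> x != y -> y != z -> x != z ->
  {in A, forall w, w != x -> e x w -> w = b} ->
  {in A, forall w, w != y -> e y w -> w = b} ->
  {in A, forall w, w != z -> e z w -> w = b} -> False.
Proof.
move=> [s hs] xA yA zA xy yz xz px py pz; have [us _ sA] := hs.
have A2 : 2 <= #|A|.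
  apply/card_geqP; exists [:: x; y]; split=> //; first by rewrite /= inE xy.
  by move=> w; rewrite !inE => /orP[] /eqP->.
have adj u : u \in A -> {in A, forall w, w != u -> e u w -> w = b} ->
    (index b s == (index u s).+1) || ((index b s).+1 == index u s).
  move=> uA pu; have [w [wA uw iw]] := hamiltonian_adjacent hs A2 uA.
  by rewrite -(pu w) //; apply: contraTneq iw => ->; lia.
have index_neq u v : u \in A -> v \in A -> u != v -> index u s != index v s.
  move=> uA vA; apply: contra => /eqP iuv; apply/eqP.
  by apply: (index_inj u) iuv; rewrite sA.
(* The position of [b] on the path has at most two neighbouring positions. *)
move: (adj x xA px) (adj y yA py) (adj z zA pz).
move: (index_neq x y xA yA xy) (index_neq y z yA zA yz) (index_neq x z xA zA xz).
lia.
Qed.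
End Traceable.

Section VertexDeleted.
Variables (T : finType) (e : rel T) (s : seq T).
Hypotheses (e_sym : symmetric e) (s_uniq : uniq s) (s_size : 3 <= size s).
Hypothesis deleted : vertex_deleted_traceable e [set x in s].

Lemma deleted_card u : u \in s -> #|[set x in s] :\ u| = (size s).-1.
Proof.
move=> us; have := cardsD1 u [set x in s].
by rewrite inE us cardsE (card_uniqP s_uniq) => ->.
Qed.

Lemma deleted_neighbour u x : u \in s -> x \in s -> x != u ->
  exists2 w, w \in s & [&& w != u, w != x & e x w].
Proof.
move=> us xs xu; have uA : u \in [set x in s] by rewrite inE.
have A2 : 2 <= #|[set x in s] :\ u| by rewrite deleted_card //; lia.
have xA : x \in [set x in s] :\ u by rewrite !inE xu.
have [w] := traceable_neighbour e_sym (deleted uA) A2 xA.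
by rewrite !inE => /andP[wu ws] /andP[wx xw]; exists w; rewrite ?wu ?wx.
Qed.

Lemma deleted_no_three_pendants u b x y z : u \in s ->
  x \in s -> y \in s -> z \in s -> x != u -> y != u -> z != u ->
  x != y -> y != z -> x != z ->
  (forall w, w \in s -> w != u -> w != x -> e x w -> w = b) ->
  (forall w, w \in s -> w != u -> w != y -> e y w -> w = b) ->
  (forall w, w \in s -> w != u -> w != z -> e z w -> w = b) -> False.
Proof.
move=> us xs ys zs xu yu zu xy yz xz px py pz.
have uA : u \in [set x in s] by rewrite inE.
have pendant v : (forall w, w \in s -> w != u -> w != v -> e v w -> w = b) ->
    {in [set x in s] :\ u, forall w, w != v -> e v w -> w = b}.
  by move=> pv w; rewrite !inE => /andP[wu ws]; apply: pv.
apply: (no_three_pendants e_sym (deleted uA) _ _ _ xy yz xz);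
  rewrite ?inE ?xu ?yu ?zu //; exact: pendant.
Qed.
End VertexDeleted.

Section SmallOrders.
Variables (T : finType) (e : rel T).
Hypothesis e_sym : symmetric e.

Ltac in_seq := by rewrite !inE eqxx ?orbT.

Ltac distinct := match goal with us : is_true (uniq _) |- _ =>
  by apply: contraTneq us => ->; rewrite /= !inE !eqxx /= ?orbT /= ?andbF end.

Ltac refute_edge := match goal with
  | E : ?r ?a ?b = false |- is_true (?r ?a ?b) -> _ => by rewrite E
  | E : ?r ?a ?b = false |- is_true (?r ?b ?a) -> _ => by rewrite e_sym E
  end.

Ltac case_in_seq :=
  let rec split_cases :=
    first [case/orP => [/eqP-> | ]; last split_cases | move/eqP->] in
  rewrite !inE; split_cases.

(* [q] lists positions in [v :: p1 :: p2 :: ...]: [0] is [v] and [i] is [p_i]. *)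
Ltac by_order order q :=
  apply: (order q) => //=; repeat (apply/andP; split); by [ | rewrite e_sym].

Ltac no_neighbour lonely u x :=
  case: (lonely u x); [in_seq | in_seq | distinct | move=> w];
  case_in_seq; move=> /and3P[/eqP ? /eqP ?]; by [ | refute_edge].

Ltac no_pendants pend u b x y z :=
  case: (pend u b x y z); try in_seq; try distinct;
  move=> ?; case_in_seq; move=> /eqP ? /eqP ?; by [ | refute_edge].

Lemma traceable_of_deleted3 s : size s = 3 -> uniq s -> epath e (behead s) ->
  vertex_deleted_traceable e [set x in s] -> traceable e [set x in s].
Proof.
case: s => [|v [|p1 [|p2 []]]] // _ us /andP[e12 _] del.
have order q := @traceable_of_order _ e v _ q us.
have lonely := deleted_neighbour e_sym us isT del.
case E1 : (e v p1); first by by_order order [:: 0; 1; 2].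
case E2 : (e v p2); first by by_order order [:: 1; 2; 0].
by no_neighbour lonely p1 v.
Qed.

Lemma traceable_of_deleted4 s : size s = 4 -> uniq s -> epath e (behead s) ->
  vertex_deleted_traceable e [set x in s] -> traceable e [set x in s].
Proof.
case: s => [|v [|p1 [|p2 [|p3 []]]]] // _ us /and3P[e12 e23 _] del.
have order q := @traceable_of_order _ e v _ q us.
have lonely := deleted_neighbour e_sym us isT del.
case E1 : (e v p1); first by by_order order [:: 0; 1; 2; 3].
case E3 : (e v p3); first by by_order order [:: 1; 2; 3; 0].
by case E2 : (e v p2); no_neighbour lonely p2 v.
Qed.

Lemma traceable_of_deleted5 s : size s = 5 -> uniq s -> epath e (behead s) ->
  vertex_deleted_traceable e [set x in s] -> traceable e [set x in s].
Proof.
case: s => [|v [|p1 [|p2 [|p3 [|p4 []]]]]] // _ us /and4P[e12 e23 e34 _] del.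
have order q := @traceable_of_order _ e v _ q us.
have lonely := deleted_neighbour e_sym us isT del.
case E1 : (e v p1); first by by_order order [:: 0; 1; 2; 3; 4].
case E4 : (e v p4); first by by_order order [:: 1; 2; 3; 4; 0].
case E2 : (e v p2); case E3 : (e v p3);
  by [by_order order [:: 1; 2; 0; 3; 4] | no_neighbour lonely p2 v
     | no_neighbour lonely p3 v].
Qed.

Lemma traceable_of_deleted6 s : size s = 6 -> uniq s -> epath e (behead s) ->
  vertex_deleted_traceable e [set x in s] -> traceable e [set x in s].
Proof.
case: s => [|v [|p1 [|p2 [|p3 [|p4 [|p5 []]]]]]] // _ us.
move=> /and5P[e12 e23 e34 e45 _] del.
have order q := @traceable_of_order _ e v _ q us.
have lonely := deleted_neighbour e_sym us isT del.
have pend := deleted_no_three_pendants e_sym del.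
case E1 : (e v p1); first by by_order order [:: 0; 1; 2; 3; 4; 5].
case E5 : (e v p5); first by by_order order [:: 1; 2; 3; 4; 5; 0].
case E2 : (e v p2); case E3 : (e v p3); case E4 : (e v p4);
  try by [by_order order [:: 1; 2; 0; 3; 4; 5]
         | by_order order [:: 1; 2; 3; 0; 4; 5]
         | no_neighbour lonely p2 v | no_neighbour lonely p3 v
         | no_neighbour lonely p4 v].
(* Only the configuration N(v) = {p2, p4} is left. *)
case E13 : (e p1 p3); first by by_order order [:: 0; 2; 1; 3; 4; 5].
case E15 : (e p1 p5); first by by_order order [:: 0; 2; 3; 4; 5; 1].
case E35 : (e p3 p5); first by by_order order [:: 1; 2; 0; 4; 3; 5].
by no_pendants pend p2 p4 v p1 p3.
Qed.

Lemma traceable_of_deleted7 s : size s = 7 -> uniq s -> epath e (behead s) ->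
  vertex_deleted_traceable e [set x in s] -> traceable e [set x in s].
Proof.
case: s => [|v [|p1 [|p2 [|p3 [|p4 [|p5 [|p6 []]]]]]]] // _ us.
move=> /and5P[e12 e23 e34 e45 /andP[e56 _]] del.
have order q := @traceable_of_order _ e v _ q us.
have lonely := deleted_neighbour e_sym us isT del.
have pend := deleted_no_three_pendants e_sym del.
case E1 : (e v p1); first by by_order order [:: 0; 1; 2; 3; 4; 5; 6].
case E6 : (e v p6); first by by_order order [:: 1; 2; 3; 4; 5; 6; 0].
case E2 : (e v p2); case E3 : (e v p3); case E4 : (e v p4); case E5 : (e v p5);
  try by [by_order order [:: 1; 2; 0; 3; 4; 5; 6]
         | by_order order [:: 1; 2; 3; 0; 4; 5; 6]
         | by_order order [:: 1; 2; 3; 4; 0; 5; 6]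
         | no_neighbour lonely p2 v | no_neighbour lonely p3 v
         | no_neighbour lonely p4 v | no_neighbour lonely p5 v].
(* Left: N(v) = {p2, p4}, {p2, p5} and {p3, p5}, in this order. *)
- case E13 : (e p1 p3); first by by_order order [:: 0; 2; 1; 3; 4; 5; 6].
  case E15 : (e p1 p5); first by by_order order [:: 0; 4; 3; 2; 1; 5; 6].
  case E16 : (e p1 p6); first by by_order order [:: 0; 2; 3; 4; 5; 6; 1].
  case E36 : (e p3 p6); first by by_order order [:: 0; 4; 5; 6; 3; 2; 1].
  case E35 : (e p3 p5); first by by_order order [:: 1; 2; 0; 4; 3; 5; 6].
  by no_pendants pend p2 p4 v p1 p3.
- case E13 : (e p1 p3); first by by_order order [:: 0; 2; 1; 3; 4; 5; 6].
  case E16 : (e p1 p6); first by by_order order [:: 0; 2; 3; 4; 5; 6; 1].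
  case E14 : (e p1 p4); first by by_order order [:: 6; 5; 0; 2; 3; 4; 1].
  case E36 : (e p3 p6); first by by_order order [:: 1; 2; 0; 5; 4; 3; 6].
  case E46 : (e p4 p6); first by by_order order [:: 0; 5; 6; 4; 3; 2; 1].
  by no_pendants pend p2 p5 v p1 p6.
- case E46 : (e p4 p6); first by by_order order [:: 0; 5; 6; 4; 3; 2; 1].
  case E26 : (e p2 p6); first by by_order order [:: 0; 3; 4; 5; 6; 2; 1].
  case E16 : (e p1 p6); first by by_order order [:: 0; 5; 4; 3; 2; 1; 6].
  case E14 : (e p1 p4); first by by_order order [:: 0; 3; 2; 1; 4; 5; 6].
  case E24 : (e p2 p4); first by by_order order [:: 6; 5; 0; 3; 4; 2; 1].
  by no_pendants pend p5 p3 v p6 p4.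
Qed.
End SmallOrders.

Section Monotonicity.
Variables (T : finType) (e : rel T).
Hypothesis e_sym : symmetric e.

Lemma traceable_of_deleted (A : {set T}) :
  3 <= #|A| <= 7 -> vertex_deleted_traceable e A -> traceable e A.
Proof.
move=> A37 del; have /card_gt0P[v vA] : 0 < #|A| by lia.
have [P hP] := del v vA; have [uP pP PA] := hP.
have As : A = [set x in v :: P].
  apply/setP => x; rewrite !inE PA !inE.
  by case: (x =P v) => [->|] //=; rewrite andbT.
have us : uniq (v :: P) by rewrite /= uP PA !inE eqxx.
have sizeP : size (v :: P) = #|A|.
  by rewrite /= (hamiltonian_size hP) (cardsD1 v A) vA.
rewrite As in del *.
have [s3|[s4|[s5|[s6|s7]]]] : size (v :: P) = 3 \/ size (v :: P) = 4 \/
    size (v :: P) = 5 \/ size (v :: P) = 6 \/ size (v :: P) = 7.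
  by rewrite sizeP; lia.
- exact: (traceable_of_deleted3 e_sym s3 us pP del).
- exact: (traceable_of_deleted4 e_sym s4 us pP del).
- exact: (traceable_of_deleted5 e_sym s5 us pP del).
- exact: (traceable_of_deleted6 e_sym s6 us pP del).
- exact: (traceable_of_deleted7 e_sym s7 us pP del).
Qed.

Lemma traceable_subsets_succ k :
  2 <= k <= 6 -> traceable_subsets e k -> traceable_subsets e k.+1.
Proof.
move=> k26 trk W cW; apply: traceable_of_deleted; first by rewrite cW.
by move=> u uW; apply: trk; move: cW; rewrite (cardsD1 u W) uW => -[].
Qed.

Lemma traceable_subsets_mono k j :
  2 <= k <= j -> j <= 7 -> traceable_subsets e k -> traceable_subsets e j.
Proof.
move=> /andP[k2 kj] j7 trk; elim: j kj j7 => [|j IHj]; first by lia.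
rewrite leq_eqVlt => /orP[/eqP <- //| kj] j7.
by apply: traceable_subsets_succ; [lia | apply: IHj; lia].
Qed.
End Monotonicity.

Theorem mainTheorem14 (T : finType) (e : rel T)
    (He_sym : symmetric e) (He_irr : irreflexive e)
    (n k : nat) (Hn : #|T| = n) (Hn3 : 3 <= n) (Hn7 : n <= 7)
    (Hk2 : 2 <= k) (Hkn : k < n)
    (Hpsi : psi e k = n - k + 1) :
  forall j : nat, k < j <= n -> psi e j = n - j + 1.
Proof.
move=> j /andP[kj jn]; subst n.
apply: psi_of_traceable_subsets; first by lia.
apply: (traceable_subsets_mono He_sym (k := k)); [lia | lia |].
exact: traceable_subsets_of_psi (ltnW Hkn) Hpsi.
Qed.
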